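(* Let $\beta_1,\dots,\beta_p\in\mathbb{R}$, $\delta_1^2,\dots,\delta_p^2>0$, $\sigma^2>0$, $\nu>0$, and $\Sigma=\sigma^2\boldsymbol\beta\boldsymbol\beta^\top+\mathrm{diag}(\delta_1^2,\dots,\delta_p^2)$. Let $k_p$ be the number of strictly positive entries of the long-only minimum variance portfolio (the minimizer of $w^\top\Sigma w$ subject to $\sum_iw_i=1$, $w_i\ge0$). Define $$G_p(y)=\frac{\nu^2}{p\sigma^2}+\frac{\nu^2}{p}\sum_{j=1}^p\frac{\beta_j}{\delta_j^2}(\beta_j-y)\mathbf{1}_{\{\beta_j\le y\}}.$$ Suppose $\frac1p\sum_{i=1}^p\beta_i/\delta_i^2>0$ and $G_p$ has a unique zero $\beta^*(p)\in(0,\infty)$. Then $$k_p=\sum_{i=1}^p\mathbf{1}_{\{\beta_i<\beta^*(p)\}},$$ i.e. $k_p/p=F_p(\beta^*(p)^-)$, where $F_p$ is the empirical cdf of $\beta_1,\dots,\beta_p$ and $F_p(t^-)$ denotes its left limit at $t$.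
   Context: In the paper $\nu$ is defined by $1/\nu^2=\mathbb{E}[1/\delta^2]$ for the distribution from which the $\delta_j^2$ are drawn; only $\nu>0$ matters here. *)

From mathcomp Require Import all_boot all_order all_algebra.
Set Implicit Arguments. Unset Strict Implicit. Unset Printing Implicit Defensive.
Import Order.TTheory GRing.Theory Num.Theory.
Local Open Scope ring_scope.

Definition factor_cov (R : realFieldType) (p : nat) (sigma2 : R)
  (beta delta2 : 'I_p -> R) : 'M[R]_p :=
  \matrix_(i, j) (sigma2 * beta i * beta j + (i == j)%:R * delta2 i).

Definition port_var (R : realFieldType) (p : nat) (S : 'M[R]_p) (w : 'cV[R]_p) : R :=
  ((w^T *m S *m w) 0 0).

Definition long_only (R : realFieldType) (p : nat) (w : 'cV[R]_p) : Prop :=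
  (forall i, 0 <= w i 0) /\ \sum_i w i 0 = 1.

Definition is_lo_mvp (R : realFieldType) (p : nat) (S : 'M[R]_p) (w : 'cV[R]_p) : Prop :=
  long_only w /\ forall v : 'cV[R]_p, long_only v -> port_var S w <= port_var S v.

Definition Gp (R : realFieldType) (p : nat) (sigma2 nu : R)
  (beta delta2 : 'I_p -> R) (y : R) : R :=
  nu ^+ 2 / (p%:R * sigma2) +
  nu ^+ 2 / p%:R * \sum_j (if beta j <= y then beta j / delta2 j * (beta j - y) else 0).

From mathcomp Require Import all_boot all_order all_algebra.
From mathcomp.algebra_tactics Require Import ring lra.
(* At a long-only v where (Sigma v)_i is >= some level c, with equality on the
   support of v (the KKT conditions of the long-only problem), expanding the quadratic
   form gives  u'Sigma u - v'Sigma v >= (u - v)'Sigma (u - v) >= sum_i delta_i^2 (u_i - v_i)^2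
   for every long-only u, so v is the unique minimiser.  The candidate is
   v_i ~ (bstar - beta_i)_+ / delta_i^2: the equation G_p bstar = 0 says exactly that
   sigma^2 sum_i beta_i v_i is the normalising constant, which makes (Sigma v)_i
   proportional to max (beta_i, bstar).  Its support is {i | beta_i < bstar}. *)

Set Implicit Arguments.
Unset Strict Implicit.
Unset Printing Implicit Defensive.
Import Order.TTheory GRing.Theory Num.Theory.
Local Open Scope ring_scope.

Section QuadraticForm.
Variables (R : realFieldType) (p : nat).

Lemma long_only_variational (g : 'I_p -> R) (c : R) (u v : 'cV[R]_p) :
  long_only u -> long_only v -> (forall i, c <= g i) ->
  (forall i, 0 < v i 0 -> g i = c) ->
  0 <= \sum_i (u i 0 - v i 0) * g i.
Proof.
move=> [u_ge0 u_sum] [v_ge0 v_sum] g_ge g_supp.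
have shift : \sum_i (u i 0 - v i 0) * g i =
    \sum_i (u i 0 - v i 0) * (g i - c) + c * (\sum_i u i 0 - \sum_i v i 0).
  rewrite -sumrB mulr_sumr -big_split /=; apply: eq_bigr => i _; ring.
rewrite shift u_sum v_sum subrr mulr0 addr0; apply: sumr_ge0 => i _.
have [v_gt0 | v_le0] := ltP 0 (v i 0); first by rewrite g_supp ?subrr ?mulr0.
have -> : v i 0 = 0 by apply/eqP; rewrite eq_le v_le0 v_ge0.
by rewrite subr0 mulr_ge0 ?subr_ge0.
Qed.

Variable S : 'M[R]_p.

Lemma trmx_mulmxE (d v : 'cV[R]_p) :
  (d^T *m S *m v) 0 0 = \sum_i d i 0 * (S *m v) i 0.
Proof. by rewrite -mulmxA mxE; apply: eq_bigr => i _; rewrite mxE. Qed.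

Hypothesis S_sym : S^T = S.

Lemma port_varDr (v d : 'cV[R]_p) :
  port_var S (v + d) = port_var S v + 2 * (d^T *m S *m v) 0 0 + port_var S d.
Proof.
have vSd : (v^T *m S *m d) 0 0 = (d^T *m S *m v) 0 0.
  have tr11 (M : 'M[R]_1) : M^T 0 0 = M 0 0 by rewrite mxE.
  by rewrite -tr11 !trmx_mul trmxK S_sym mulmxA.
have addE (A B : 'M[R]_1) : (A + B) 0 0 = A 0 0 + B 0 0 by rewrite mxE.
rewrite /port_var [(v + d)^T]linearD /= !(mulmxDl, mulmxDr) !addE vSd; ring.
Qed.

Lemma lo_port_var_first_order (c : R) (u v : 'cV[R]_p) :
  long_only u -> long_only v -> (forall i, c <= (S *m v) i 0) ->
  (forall i, 0 < v i 0 -> (S *m v) i 0 = c) ->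
  port_var S v + port_var S (u - v) <= port_var S u.
Proof.
move=> lo_u lo_v Sv_ge Sv_supp.
have -> : port_var S u = port_var S (v + (u - v)) by rewrite subrKC.
rewrite (port_varDr v (u - v)) trmx_mulmxE.
have subE i : (u - v) i 0 = u i 0 - v i 0 by rewrite !mxE.
under eq_bigr do rewrite subE.
have := long_only_variational lo_u lo_v Sv_ge Sv_supp; lra.
Qed.

End QuadraticForm.

Section FactorModel.
Variables (R : realFieldType) (p : nat) (sigma2 : R) (beta delta2 : 'I_p -> R).
Local Notation Sigma := (factor_cov sigma2 beta delta2).

Lemma factor_cov_sym : Sigma^T = Sigma.
Proof.
apply/matrixP => i j; rewrite !mxE eq_sym.
by case: eqVneq => [-> | _]; rewrite ?mulr0n ?mul0r mulrAC.
Qed.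

Lemma factor_cov_mulE (v : 'cV[R]_p) i :
  (Sigma *m v) i 0 = sigma2 * beta i * \sum_j beta j * v j 0 + delta2 i * v i 0.
Proof.
rewrite mxE; under eq_bigr do rewrite mxE mulrDl.
rewrite big_split /= mulr_sumr; congr (_ + _).
  by apply: eq_bigr => j _; rewrite mulrA.
rewrite (bigD1 i) //= eqxx mulr1n mul1r big1 ?addr0 // => j /negbTE ij.
by rewrite eq_sym ij mulr0n !mul0r.
Qed.

Lemma port_var_factor_cov (u : 'cV[R]_p) :
  port_var Sigma u = sigma2 * (\sum_i beta i * u i 0) ^+ 2 + \sum_i delta2 i * u i 0 ^+ 2.
Proof.
rewrite /port_var trmx_mulmxE.
under eq_bigr do rewrite factor_cov_mulE mulrDr.
rewrite big_split /= expr2; set B := \sum_j beta j * u j 0.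
congr (_ + _); last by apply: eq_bigr => i _; ring.
rewrite {2}/B mulr_suml mulr_sumr; apply: eq_bigr => i _; ring.
Qed.

Lemma port_var_factor_cov_ge (d : 'cV[R]_p) :
  0 <= sigma2 -> \sum_i delta2 i * d i 0 ^+ 2 <= port_var Sigma d.
Proof. by move=> sigma2_ge0; rewrite port_var_factor_cov lerDr mulr_ge0 ?sqr_ge0. Qed.

Definition threshold_weight (y : R) (i : 'I_p) : R :=
  if beta i < y then (y - beta i) / delta2 i else 0.

Lemma Gp_threshold (nu y : R) :
  Gp sigma2 nu beta delta2 y =
  nu ^+ 2 / p%:R * (sigma2^-1 - \sum_i beta i * threshold_weight y i).
Proof.
rewrite /Gp.
have -> : \sum_j (if beta j <= y then beta j / delta2 j * (beta j - y) else 0) =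
          - \sum_i beta i * threshold_weight y i.
  rewrite -sumrN; apply: eq_bigr => i _; rewrite /threshold_weight.
  by case: ltgtP => [_ | _ | ->]; rewrite ?subrr ?mulr0 ?oppr0 //; ring.
by rewrite [(_ * sigma2)^-1]invfM; ring.
Qed.

Hypothesis delta2_gt0 : forall i, 0 < delta2 i.

Lemma lo_mvp_factor_cov_unique (c : R) (v w : 'cV[R]_p) :
  0 <= sigma2 -> long_only v -> (forall i, c <= (Sigma *m v) i 0) ->
  (forall i, 0 < v i 0 -> (Sigma *m v) i 0 = c) ->
  is_lo_mvp Sigma w -> w = v.
Proof.
move=> sigma2_ge0 lo_v Sv_ge Sv_supp [lo_w w_min].
have sq_ge0 i : 0 <= delta2 i * (w - v) i 0 ^+ 2 by rewrite mulr_ge0 ?sqr_ge0 ?ltW.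
have dist0 : \sum_i delta2 i * (w - v) i 0 ^+ 2 = 0.
  have : 0 <= \sum_i delta2 i * (w - v) i 0 ^+ 2 by apply: sumr_ge0.
  have := lo_port_var_first_order factor_cov_sym lo_w lo_v Sv_ge Sv_supp.
  have := w_min v lo_v; have := port_var_factor_cov_ge (w - v) sigma2_ge0.
  lra.
apply/matrixP => i j; rewrite [j]ord1; apply/eqP; rewrite -subr_eq0.
have /eqP := @psumr_eq0P _ _ xpredT _ (fun i _ => sq_ge0 i) dist0 i isT.
by rewrite mulf_eq0 gt_eqF //= sqrf_eq0 !mxE.
Qed.

Section Threshold.
Variable y : R.
Hypothesis threshold_budget : sigma2 * \sum_i beta i * threshold_weight y i = 1.

Let A := \sum_i threshold_weight y i.

Lemma threshold_weight_gt0 i : (0 < threshold_weight y i) = (beta i < y).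
Proof.
rewrite /threshold_weight; case: ifP => [lt_y | _]; last by rewrite ltxx.
by rewrite divr_gt0 ?subr_gt0.
Qed.

Lemma threshold_weight_ge0 i : 0 <= threshold_weight y i.
Proof.
rewrite le_eqVlt threshold_weight_gt0 /threshold_weight.
by case: ifP => _; rewrite ?eqxx ?orbT.
Qed.

Lemma threshold_mass_gt0 : 0 < A.
Proof.
rewrite lt_def sumr_ge0 ?andbT => [|i _]; last exact: threshold_weight_ge0.
apply/eqP => /(psumr_eq0P (fun i _ => threshold_weight_ge0 i)) A0.
move: threshold_budget; rewrite big1 ?mulr0 => [/eqP|i _]; last by rewrite A0 ?mulr0.
by rewrite eq_sym oner_eq0.
Qed.

Definition threshold_portfolio : 'cV[R]_p := A^-1 *: \col_i threshold_weight y i.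

Lemma threshold_portfolio_gt0 i : (0 < threshold_portfolio i 0) = (beta i < y).
Proof. by rewrite !mxE pmulr_rgt0 ?invr_gt0 ?threshold_mass_gt0 ?threshold_weight_gt0. Qed.

Lemma threshold_portfolio_long_only : long_only threshold_portfolio.
Proof.
have A_gt0 := threshold_mass_gt0.
split=> [i | ]; first by rewrite !mxE mulr_ge0 ?invr_ge0 ?threshold_weight_ge0 // ltW.
by under eq_bigr do rewrite !mxE; rewrite -mulr_sumr mulVf ?gt_eqF.
Qed.

Lemma factor_cov_mul_threshold i :
  (Sigma *m threshold_portfolio) i 0 = Num.max (beta i) y / A.
Proof.
have A_neq0 := gt_eqF threshold_mass_gt0.
rewrite factor_cov_mulE.
have -> : \sum_j beta j * threshold_portfolio j 0 =
          A^-1 * \sum_j beta j * threshold_weight y j.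
  by rewrite mulr_sumr; apply: eq_bigr => j _; rewrite !mxE; ring.
set X := \sum_j _; have -> : sigma2 * beta i * (A^-1 * X) = beta i / A * (sigma2 * X) by ring.
rewrite threshold_budget mulr1 !mxE /threshold_weight.
case: ifP => [lt_y | /negbT]; last by rewrite -leNgt => le_y; rewrite max_l // !mulr0 addr0.
by rewrite max_r ?ltW //; field; rewrite A_neq0 gt_eqF.
Qed.

Lemma lo_mvp_factor_cov_threshold (w : 'cV[R]_p) :
  0 <= sigma2 -> is_lo_mvp Sigma w -> w = threshold_portfolio.
Proof.
have A_gt0 := threshold_mass_gt0.
move=> sigma2_ge0; apply: (@lo_mvp_factor_cov_unique (y / A)) => // [|i|i].
- exact: threshold_portfolio_long_only.
- by rewrite factor_cov_mul_threshold ler_pM2r ?invr_gt0 // le_max lexx orbT.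
- by rewrite threshold_portfolio_gt0 factor_cov_mul_threshold => /ltW/max_r->.
Qed.

End Threshold.

End FactorModel.

Theorem lemma4 (R : realFieldType) (p : nat) (beta delta2 : 'I_p -> R)
  (sigma2 nu bstar : R)
  (hdelta : forall i, 0 < delta2 i) (hsigma : 0 < sigma2) (hnu : 0 < nu)
  (hmean : 0 < p%:R^-1 * \sum_i beta i / delta2 i)
  (hbpos : 0 < bstar)
  (hzero : Gp sigma2 nu beta delta2 bstar = 0)
  (huniq : forall y : R, Gp sigma2 nu beta delta2 y = 0 -> y = bstar)
  (w : 'cV[R]_p)
  (hw : is_lo_mvp (factor_cov sigma2 beta delta2) w) :
  #|[set i : 'I_p | 0 < w i 0]| = #|[set i : 'I_p | beta i < bstar]|.
Proof.
have p_neq0 : p%:R != 0 :> R.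
  by apply: contraTneq hmean => ->; rewrite invr0 mul0r ltxx.
have budget : sigma2 * \sum_i beta i * threshold_weight beta delta2 bstar i = 1.
  move/eqP: hzero; rewrite Gp_threshold mulf_eq0 subr_eq0.
  rewrite mulf_eq0 expf_eq0 invr_eq0 (negbTE p_neq0) gt_eqF //= => /eqP <-.
  by rewrite divff ?gt_eqF.
rewrite (lo_mvp_factor_cov_threshold hdelta budget (ltW hsigma) hw).
by apply: eq_card => i; rewrite !inE (threshold_portfolio_gt0 hdelta budget).
Qed.
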